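(* Let $U\in C(\mathbb R^n)$ be strictly $v$-convex with constant $\alpha>0$. Then for every $c\ge-(m-1)\alpha$ and every $r\in\mathbb R$, the function $u(x,t)=ct-U(x)+r$ is a viscosity supersolution of the horizontal mean curvature flow equation $$u_t-\operatorname{tr}\Big[\Big(I_m-\frac{Xu}{|Xu|}\otimes\frac{Xu}{|Xu|}\Big)X^2u\Big]=0\quad\text{in }\mathbb R^n\times(0,+\infty).$$
   Context: Step two Carnot group setting. Write $\mathbb R^n=\mathbb R^m\times\mathbb R^{n-m}$ with $2\le m<n$ and points $x=(x_h,x_v)$. Fix $n-m$ linearly independent skew-symmetric $m\times m$ real matrices $B^{(1)},\dots,B^{(n-m)}$. Let $\sigma(x)$ be the $n\times m$ matrix whose first $m$ rows form $I_m$ and whose $(m+k)$-th row is ${}^t(B^{(k)}x_h)$. The vector fields are $X_j=\sum_{i}\sigma_{ij}(x)\partial_i$. For $u\in C^2$, $Xu=\nabla u\,\sigma(x)$ and $X^2u={}^t\sigma(x)D^2u\,\sigma(x)$. The horizontal mean curvature flow equation is $u_t+F(Xu,X^2u)=0$ with $F(q,A)=-\operatorname{tr}[(I_m-\frac{q}{|q|}\otimes\frac{q}{|q|})A]$ for $q\in\mathbb R^m\setminus\{0\}$, $A\in\mathcal S^m$. Viscosity supersolution: a lower semicontinuous $u$ such that for every $\phi\in C^2$ and every local minimum point $(x,t)$ of $u-\phi$, $\phi_t(x,t)+G^*(x,t,\nabla\phi(x,t),D^2\phi(x,t))\ge0$, where $G(x,t,p,A)=F(p\sigma(x),{}^t\sigma(x)A\sigma(x))$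 for $p\sigma(x)\ne0$ and $G^*$ is its upper semicontinuous envelope on $\mathbb R^n\times(0,\infty)\times\mathbb R^n\times\mathcal S^n$. Definition: a continuous $U:\mathbb R^n\to\mathbb R$ is $v$-convex if there is $\alpha\ge0$ such that for every $\phi\in C^2(\mathbb R^n)$ for which $U-\phi$ has a local maximum at $x_o$, one has $X^2\phi(x_o)\ge\alpha I_m$; it is strictly $v$-convex (with constant $\alpha$) if this holds with some $\alpha>0$. *)

From Stdlib Require Import Reals Lra.
Open Scope R_scope.

(* Points of R^d are encoded as  x : nat -> R  with  x i = 0  for  i >= d.
   Coordinates are 0-based: x_h = (x 0, ..., x (m-1)), x_v = (x m, ..., x (n-1)). *)
Definition inRd (d : nat) (x : nat -> R) : Prop := forall i, (d <= i)%nat -> x i = 0.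

Fixpoint fsum (k : nat) (f : nat -> R) : R :=
  match k with O => 0 | S k' => fsum k' f + f k' end.

Definition upd (x : nat -> R) (i : nat) (h : R) : nat -> R :=
  fun j => if Nat.eqb j i then x j + h else x j.

Definition near (d : nat) (x y : nat -> R) (delta : R) : Prop :=
  forall i, (i < d)%nat -> Rabs (y i - x i) < delta.

Definition proj (n : nat) (z : nat -> R) : nat -> R :=
  fun i => if Nat.ltb i n then z i else 0.

Definition cont_on (d : nat) (Om : (nat -> R) -> Prop) (f : (nat -> R) -> R) : Prop :=
  forall x, inRd d x -> Om x -> forall eps, 0 < eps -> exists delta, 0 < delta /\
    forall y, inRd d y -> Om y -> near d x y delta -> Rabs (f y - f x) < eps.

Definition lsc_on (d : nat) (Om : (nat -> R) -> Prop) (f : (nat -> R) -> R) : Prop :=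
  forall x, inRd d x -> Om x -> forall eps, 0 < eps -> exists delta, 0 < delta /\
    forall y, inRd d y -> Om y -> near d x y delta -> f y > f x - eps.

Definition C2_on (d : nat) (Om : (nat -> R) -> Prop) (f : (nat -> R) -> R)
  (Df : nat -> (nat -> R) -> R) (D2f : nat -> nat -> (nat -> R) -> R) : Prop :=
  (forall x, inRd d x -> Om x -> forall i, (i < d)%nat ->
     derivable_pt_lim (fun h => f (upd x i h)) 0 (Df i x)) /\
  (forall x, inRd d x -> Om x -> forall i j, (i < d)%nat -> (j < d)%nat ->
     derivable_pt_lim (fun h => Df j (upd x i h)) 0 (D2f i j x)) /\
  cont_on d Om f /\
  (forall i, (i < d)%nat -> cont_on d Om (Df i)) /\
  (forall i j, (i < d)%nat -> (j < d)%nat -> cont_on d Om (D2f i j)).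

(* B k i j = (B^{(k+1)})_{ij}, k < n-m, i,j < m *)
Definition skew_family (n m : nat) (B : nat -> nat -> nat -> R) : Prop :=
  forall k i j, (k < n - m)%nat -> (i < m)%nat -> (j < m)%nat -> B k i j = - B k j i.

Definition lin_indep_family (n m : nat) (B : nat -> nat -> nat -> R) : Prop :=
  forall c : nat -> R,
    (forall i j, (i < m)%nat -> (j < m)%nat -> fsum (n - m) (fun k => c k * B k i j) = 0) ->
    forall k, (k < n - m)%nat -> c k = 0.

Definition sigma (m : nat) (B : nat -> nat -> nat -> R) (x : nat -> R) (i j : nat) : R :=
  if Nat.ltb i m then (if Nat.eqb i j then 1 else 0)
  else fsum m (fun l => B (i - m)%nat j l * x l).

Definition Xvec (n m : nat) B (x p : nat -> R) (j : nat) : R :=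
  fsum n (fun i => p i * sigma m B x i j).

Definition X2mat (n m : nat) B (x : nat -> R) (A : nat -> nat -> R) (j l : nat) : R :=
  fsum n (fun i => fsum n (fun i' => sigma m B x i j * A i i' * sigma m B x i' l)).

Definition sqnorm (m : nat) (q : nat -> R) : R := fsum m (fun j => q j ^ 2).

Definition Fop (m : nat) (q : nat -> R) (A : nat -> nat -> R) : R :=
  - (fsum m (fun j => A j j)
     - fsum m (fun j => fsum m (fun l => (q j / sqrt (sqnorm m q)) * (q l / sqrt (sqnorm m q)) * A l j))).

Definition Gop (n m : nat) B (x p : nat -> R) (A : nat -> nat -> R) : R :=
  Fop m (Xvec n m B x p) (X2mat n m B x A).

Definition G_dom (n m : nat) B (x : nat -> R) (t : R) (p : nat -> R) (A : nat -> nat -> R) : Prop :=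
  inRd n x /\ 0 < t /\ inRd n p /\
  (forall i j, (i < n)%nat -> (j < n)%nat -> A i j = A j i) /\
  exists j, (j < m)%nat /\ Xvec n m B x p j <> 0.

Definition close4 (n : nat) x t p (A : nat -> nat -> R) x' t' p' (A' : nat -> nat -> R) delta : Prop :=
  near n x x' delta /\ Rabs (t' - t) < delta /\ near n p p' delta /\
  (forall i j, (i < n)%nat -> (j < n)%nat -> Rabs (A' i j - A i j) < delta).

(* L = G^*(x,t,p,A) = limsup of G over admissible points tending to (x,t,p,A) *)
Definition Gstar_is (n m : nat) B (x : nat -> R) (t : R) (p : nat -> R)
  (A : nat -> nat -> R) (L : R) : Prop :=
  forall eps, 0 < eps ->
    (exists delta, 0 < delta /\ forall x' t' p' A', G_dom n m B x' t' p' A' ->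
        close4 n x t p A x' t' p' A' delta -> Gop n m B x' p' A' < L + eps) /\
    (forall delta, 0 < delta -> exists x' t' p' A', G_dom n m B x' t' p' A' /\
        close4 n x t p A x' t' p' A' delta /\ Gop n m B x' p' A' > L - eps).

(* Space-time points (x,t) in R^n x R are encoded as z in R^{n+1}, with x = proj n z
   and t = z n. The domain is R^n x (0,+oo). *)
Definition spacetime (n : nat) : (nat -> R) -> Prop := fun z => 0 < z n.

Definition supersol (n m : nat) B (u : (nat -> R) -> R) : Prop :=
  lsc_on (S n) (spacetime n) u /\
  forall (phi : (nat -> R) -> R) Dphi D2phi,
    C2_on (S n) (spacetime n) phi Dphi D2phi ->
    forall z, inRd (S n) z -> spacetime n z ->
      (exists delta, 0 < delta /\ forall y, inRd (S n) y -> spacetime n y ->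
          near (S n) z y delta -> u y - phi y >= u z - phi z) ->
      exists L, Gstar_is n m B (proj n z) (z n) (proj n (fun i => Dphi i z))
                  (fun i j => D2phi i j z) L /\
                Dphi n z + L >= 0.

Definition vconvex_with (n m : nat) B (U : (nat -> R) -> R) (alpha : R) : Prop :=
  forall (phi : (nat -> R) -> R) Dphi D2phi,
    C2_on n (fun _ => True) phi Dphi D2phi ->
    forall xo, inRd n xo ->
      (exists delta, 0 < delta /\ forall y, inRd n y -> near n xo y delta ->
          U y - phi y <= U xo - phi xo) ->
      forall xi : nat -> R,
        fsum m (fun j => fsum m (fun l => xi j * X2mat n m B xo (fun i i' => D2phi i i' xo) j l * xi l))
        >= alpha * sqnorm m xi.

From Stdlib Require Import Reals Lra Lia Classical FunctionalExtensionality.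
From Coquelicot Require Import Coquelicot.
Open Scope R_scope.

(** At a point where [u - phi] has a local minimum, the time derivative of [phi]
    is at least [c] (look in the direction of decreasing time), while [-phi]
    touches [U] from above on the time slice, so the horizontal Hessian
    [M = X^2 phi] satisfies [M <= -alpha I].  For a unit vector [a], the vectors
    [e_k - a_k a] span the orthogonal complement of [a] and
    [sum_k |e_k - a_k a|^2 = m - 1]; summing the quadratic form of [-M] over them
    gives [-tr M + a^T M a >= (m - 1) alpha], i.e. [F(q, M) >= (m - 1) alpha]
    whenever [q <> 0].  Perturbing the gradient makes [X phi <> 0] at points
    arbitrarily close to the touching point, so [G^* >= (m - 1) alpha >= -c]. *)

Lemma fsum_ext k f g : (forall i, (i < k)%nat -> f i = g i) -> fsum k f = fsum k g.
Proof.
  induction k as [|k IH]; simpl; intros H; [reflexivity|].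
  rewrite IH by (intros; apply H; lia). rewrite H by lia. reflexivity.
Qed.

Lemma fsum_plus k f g : fsum k (fun i => f i + g i) = fsum k f + fsum k g.
Proof. induction k as [|k IH]; simpl; [lra|]. rewrite IH; lra. Qed.

Lemma fsum_minus k f g : fsum k (fun i => f i - g i) = fsum k f - fsum k g.
Proof. induction k as [|k IH]; simpl; [lra|]. rewrite IH; lra. Qed.

Lemma fsum_scal k a f : fsum k (fun i => a * f i) = a * fsum k f.
Proof. induction k as [|k IH]; simpl; [lra|]. rewrite IH; lra. Qed.

Lemma fsum_opp k f : fsum k (fun i => - f i) = - fsum k f.
Proof. induction k as [|k IH]; simpl; [lra|]. rewrite IH; lra. Qed.

Lemma fsum_const1 k : fsum k (fun _ => 1) = INR k.
Proof. induction k as [|k IH]; simpl fsum; [simpl; lra|]. rewrite IH, S_INR; lra. Qed.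

Lemma fsum_le k f g : (forall i, (i < k)%nat -> f i <= g i) -> fsum k f <= fsum k g.
Proof.
  induction k as [|k IH]; simpl; intros H; [lra|].
  specialize (IH (fun i Hi => H i ltac:(lia))). specialize (H k ltac:(lia)). lra.
Qed.

Lemma fsum_nonneg k f : (forall i, (i < k)%nat -> 0 <= f i) -> 0 <= fsum k f.
Proof.
  induction k as [|k IH]; simpl; intros H; [lra|].
  specialize (IH (fun i Hi => H i ltac:(lia))). specialize (H k ltac:(lia)). lra.
Qed.

Lemma fsum_abs_le k f g :
  (forall i, (i < k)%nat -> Rabs (f i) <= g i) -> Rabs (fsum k f) <= fsum k g.
Proof.
  induction k as [|k IH]; simpl; intros H; [rewrite Rabs_R0; lra|].
  eapply Rle_trans; [apply Rabs_triang|].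
  specialize (IH (fun i Hi => H i ltac:(lia))). specialize (H k ltac:(lia)). lra.
Qed.

Lemma fsum_ge_term k f i0 :
  (forall i, (i < k)%nat -> 0 <= f i) -> (i0 < k)%nat -> f i0 <= fsum k f.
Proof.
  induction k as [|k IH]; intros H Hi; [lia|]. simpl.
  destruct (Nat.eq_dec i0 k) as [->|Hne].
  - assert (0 <= fsum k f) by (apply fsum_nonneg; intros; apply H; lia). lra.
  - assert (f i0 <= fsum k f) by (apply IH; [intros; apply H|]; lia).
    specialize (H k ltac:(lia)). lra.
Qed.

Definition kdelta (j k : nat) : R := if Nat.eqb j k then 1 else 0.

Lemma fsum_kdelta k i (g : nat -> R) : (i < k)%nat -> fsum k (fun j => kdelta j i * g j) = g i.
Proof.
  induction k as [|k IH]; intros H; [lia|]. simpl. unfold kdelta at 2.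
  destruct (Nat.eqb_spec k i) as [->|Hne].
  - rewrite (fsum_ext _ _ (fun j => 0 * g j)), fsum_scal; [lra|].
    intros j Hj. unfold kdelta. destruct (Nat.eqb_spec j i); [lia|reflexivity].
  - rewrite IH by lia. lra.
Qed.

Lemma fsum_upd k (p g : nat -> R) i0 s : (i0 < k)%nat ->
  fsum k (fun i => upd p i0 s i * g i) = fsum k (fun i => p i * g i) + s * g i0.
Proof.
  intros H.
  rewrite (fsum_ext k _ (fun i => p i * g i + s * (kdelta i i0 * g i))).
  - rewrite fsum_plus, fsum_scal, fsum_kdelta by exact H. reflexivity.
  - intros i _. unfold upd, kdelta. destruct (Nat.eqb i i0); ring.
Qed.

Definition qform (m : nat) (M : nat -> nat -> R) (xi : nat -> R) : R :=
  fsum m (fun j => fsum m (fun l => xi j * M j l * xi l)).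

Lemma qform_basis_minus_multiple m (M : nat -> nat -> R) (a : nat -> R) k c : (k < m)%nat ->
  qform m M (fun j => kdelta j k - c * a j)
  = M k k - c * fsum m (fun l => M k l * a l) - c * fsum m (fun j => a j * M j k)
    + c ^ 2 * fsum m (fun j => a j * fsum m (fun l => M j l * a l)).
Proof.
  intros Hk. unfold qform.
  rewrite (fsum_ext m _ (fun j => (kdelta j k - c * a j) * M j k
                                 - c * (kdelta j k - c * a j) * fsum m (fun l => M j l * a l))).
  2:{ intros j _.
      rewrite (fsum_ext m _ (fun l => (kdelta j k - c * a j) * (kdelta l k * M j l)
                                      - (c * (kdelta j k - c * a j)) * (M j l * a l)))
        by (intros l _; unfold kdelta; ring).
      rewrite fsum_minus, !fsum_scal, fsum_kdelta by exact Hk. ring. }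
  rewrite (fsum_ext m _ (fun j => ((kdelta j k * M j k - c * (a j * M j k))
                                   - c * (kdelta j k * fsum m (fun l => M j l * a l)))
                                  + c ^ 2 * (a j * fsum m (fun l => M j l * a l))))
    by (intros j _; ring).
  rewrite fsum_plus, !fsum_minus, !fsum_scal, !fsum_kdelta by exact Hk. ring.
Qed.

Lemma sqnorm_basis_minus_projection m (a : nat -> R) k : (k < m)%nat -> sqnorm m a = 1 ->
  sqnorm m (fun j => kdelta j k - a k * a j) = 1 - a k ^ 2.
Proof.
  intros Hk Ha. unfold sqnorm in *.
  rewrite (fsum_ext m _ (fun j => kdelta j k * (1 - 2 * a k * a j) + a k ^ 2 * a j ^ 2))
    by (intros j _; unfold kdelta; destruct (Nat.eqb j k); ring).
  rewrite fsum_plus, fsum_scal, fsum_kdelta, Ha by exact Hk. ring.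
Qed.

Lemma trace_minus_unit_qform_ge m (M : nat -> nat -> R) (a : nat -> R) alpha :
  sqnorm m a = 1 -> (forall xi, qform m M xi >= alpha * sqnorm m xi) ->
  fsum m (fun j => M j j) - fsum m (fun j => fsum m (fun l => a j * a l * M l j))
  >= (INR m - 1) * alpha.
Proof.
  intros Ha HM.
  set (Q := fsum m (fun j => a j * fsum m (fun l => M j l * a l))).
  assert (Hsum : fsum m (fun k => qform m M (fun j => kdelta j k - a k * a j))
                 >= fsum m (fun k => alpha * (1 - a k ^ 2))).
  { apply Rle_ge, fsum_le. intros k Hk.
    rewrite <- sqnorm_basis_minus_projection with (m := m) by assumption.
    apply Rge_le, HM. }
  rewrite (fsum_ext m _ (fun k => ((M k k - a k * fsum m (fun l => M k l * a l))
                                   - fsum m (fun j => a k * a j * M j k)) + Q * a k ^ 2)) in Hsum.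
  2:{ intros k Hk. rewrite qform_basis_minus_multiple by exact Hk.
      rewrite <- (fsum_scal m (a k) (fun j => a j * M j k)).
      rewrite (fsum_ext m (fun j => a k * (a j * M j k)) (fun j => a k * a j * M j k))
        by (intros; ring).
      unfold Q. ring. }
  unfold sqnorm in Ha.
  rewrite fsum_plus, !fsum_minus, fsum_scal, Ha, fsum_scal, fsum_minus, fsum_const1, Ha in Hsum.
  fold Q in Hsum. lra.
Qed.

Lemma sqnorm_pos m q : (exists j, (j < m)%nat /\ q j <> 0) -> 0 < sqnorm m q.
Proof.
  intros [j [Hj Hq]]. unfold sqnorm.
  apply Rlt_le_trans with (q j ^ 2).
  - apply pow2_gt_0, Hq.
  - apply (fsum_ge_term m (fun j => q j ^ 2)); [intros; apply pow2_ge_0|exact Hj].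
Qed.

Lemma sqnorm_normalize m q : 0 < sqnorm m q ->
  sqnorm m (fun j => q j / sqrt (sqnorm m q)) = 1.
Proof.
  intros Hq. pose proof (sqrt_lt_R0 _ Hq) as Hs. pose proof (sqrt_sqrt _ (Rlt_le _ _ Hq)) as Hss.
  unfold sqnorm at 1.
  rewrite (fsum_ext m _ (fun j => / (sqrt (sqnorm m q) * sqrt (sqnorm m q)) * q j ^ 2))
    by (intros; field; lra).
  rewrite fsum_scal. fold (sqnorm m q). rewrite Hss. field. lra.
Qed.

Lemma normalize_abs_le1 m q j : 0 < sqnorm m q -> (j < m)%nat ->
  Rabs (q j / sqrt (sqnorm m q)) <= 1.
Proof.
  intros Hq Hj. pose proof (sqrt_lt_R0 _ Hq) as Hs.
  assert (Hqj : Rabs (q j) <= sqrt (sqnorm m q)).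
  { rewrite <- sqrt_Rsqr_abs. apply sqrt_le_1_alt. unfold Rsqr.
    replace (q j * q j) with (q j ^ 2) by ring.
    apply (fsum_ge_term m (fun j => q j ^ 2)); [intros; apply pow2_ge_0|exact Hj]. }
  unfold Rdiv. rewrite Rabs_mult, Rabs_inv, (Rabs_right (sqrt _)) by lra.
  apply Rmult_le_reg_r with (sqrt (sqnorm m q)); [lra|].
  rewrite Rmult_assoc, Rinv_l by lra. lra.
Qed.

Lemma Fop_ge_of_concave m q N alpha :
  (exists j, (j < m)%nat /\ q j <> 0) ->
  (forall xi, qform m (fun j l => - N j l) xi >= alpha * sqnorm m xi) ->
  Fop m q N >= (INR m - 1) * alpha.
Proof.
  intros Hq HN.
  pose proof (trace_minus_unit_qform_ge m (fun j l => - N j l) _ alpha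
                (sqnorm_normalize m q (sqnorm_pos m q Hq)) HN) as T.
  cbv beta in T. rewrite fsum_opp in T.
  rewrite (fsum_ext m (fun j => fsum m (fun l =>
             q j / sqrt (sqnorm m q) * (q l / sqrt (sqnorm m q)) * - N l j))
           (fun j => - fsum m (fun l =>
             q j / sqrt (sqnorm m q) * (q l / sqrt (sqnorm m q)) * N l j))) in T.
  2:{ intros j _. rewrite <- fsum_opp. apply fsum_ext. intros; ring. }
  rewrite fsum_opp in T. unfold Fop. lra.
Qed.

Lemma Fop_le_abs m q N : 0 < sqnorm m q ->
  Fop m q N <= fsum m (fun j => Rabs (N j j)) + fsum m (fun j => fsum m (fun l => Rabs (N l j))).
Proof.
  intros Hq. unfold Fop.
  assert (Htr : - fsum m (fun j => N j j) <= fsum m (fun j => Rabs (N j j))).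
  { rewrite <- fsum_opp. apply fsum_le. intros j _.
    rewrite <- (Rabs_Ropp (N j j)). apply Rle_abs. }
  assert (Hproj : fsum m (fun j => fsum m (fun l =>
                    q j / sqrt (sqnorm m q) * (q l / sqrt (sqnorm m q)) * N l j))
                  <= fsum m (fun j => fsum m (fun l => Rabs (N l j)))).
  { apply fsum_le. intros j Hj. apply fsum_le. intros l Hl.
    eapply Rle_trans; [apply Rle_abs|]. rewrite !Rabs_mult.
    pose proof (normalize_abs_le1 m q j Hq Hj). pose proof (normalize_abs_le1 m q l Hq Hl).
    pose proof (Rabs_pos (q j / sqrt (sqnorm m q))). pose proof (Rabs_pos (q l / sqrt (sqnorm m q))).
    pose proof (Rabs_pos (N l j)).
    apply Rle_trans with (1 * 1 * Rabs (N l j)); [|lra].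
    apply Rmult_le_compat_r; [lra|]. apply Rmult_le_compat; lra. }
  lra.
Qed.

Lemma X2mat_opp n m B x A j l :
  X2mat n m B x (fun i i' => - A i i') j l = - X2mat n m B x A j l.
Proof.
  unfold X2mat. rewrite <- fsum_opp. apply fsum_ext; intros i _.
  rewrite <- fsum_opp. apply fsum_ext; intros i' _. ring.
Qed.

Lemma Xvec_upd n m B x p j s : (j < m)%nat -> (m <= n)%nat ->
  Xvec n m B x (upd p j s) j = Xvec n m B x p j + s.
Proof.
  intros Hj Hmn. unfold Xvec. rewrite fsum_upd by lia. unfold sigma.
  rewrite (proj2 (Nat.ltb_lt j m) Hj), Nat.eqb_refl. ring.
Qed.

Definition sigma_majorant m (B : nat -> nat -> nat -> R) (x0 : nat -> R) i j : R :=
  1 + fsum m (fun l => Rabs (B (i - m)%nat j l) * (Rabs (x0 l) + 1)).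

Lemma sigma_abs_le_majorant n m B x0 x i j : (m <= n)%nat -> near n x0 x 1 ->
  Rabs (sigma m B x i j) <= sigma_majorant m B x0 i j.
Proof.
  intros Hmn Hx.
  assert (Hsum : 0 <= fsum m (fun l => Rabs (B (i - m)%nat j l) * (Rabs (x0 l) + 1))).
  { apply fsum_nonneg. intros l _.
    apply Rmult_le_pos; [apply Rabs_pos|pose proof (Rabs_pos (x0 l)); lra]. }
  unfold sigma, sigma_majorant.
  destruct (Nat.ltb i m).
  - destruct (Nat.eqb i j); [rewrite Rabs_R1|rewrite Rabs_R0]; lra.
  - enough (Rabs (fsum m (fun l => B (i - m)%nat j l * x l))
            <= fsum m (fun l => Rabs (B (i - m)%nat j l) * (Rabs (x0 l) + 1))) by lra.
    apply fsum_abs_le. intros l Hl. rewrite Rabs_mult.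
    apply Rmult_le_compat_l; [apply Rabs_pos|].
    specialize (Hx l ltac:(lia)).
    pose proof (Rabs_triang (x l - x0 l) (x0 l)).
    replace (x l - x0 l + x0 l) with (x l) in * by ring. lra.
Qed.

Definition X2mat_majorant n m B x0 (A0 : nat -> nat -> R) j l : R :=
  fsum n (fun i => fsum n (fun i' =>
    sigma_majorant m B x0 i j * (Rabs (A0 i i') + 1) * sigma_majorant m B x0 i' l)).

Lemma X2mat_abs_le_majorant n m B x0 A0 x A j l : (m <= n)%nat -> near n x0 x 1 ->
  (forall i i', (i < n)%nat -> (i' < n)%nat -> Rabs (A i i' - A0 i i') < 1) ->
  Rabs (X2mat n m B x A j l) <= X2mat_majorant n m B x0 A0 j l.
Proof.
  intros Hmn Hx HA. unfold X2mat, X2mat_majorant.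
  apply fsum_abs_le. intros i Hi. apply fsum_abs_le. intros i' Hi'. rewrite !Rabs_mult.
  pose proof (sigma_abs_le_majorant n m B x0 x i j Hmn Hx).
  pose proof (sigma_abs_le_majorant n m B x0 x i' l Hmn Hx).
  assert (Rabs (A i i') <= Rabs (A0 i i') + 1).
  { specialize (HA i i' Hi Hi'). pose proof (Rabs_triang (A i i' - A0 i i') (A0 i i')).
    replace (A i i' - A0 i i' + A0 i i') with (A i i') in * by ring. lra. }
  apply Rmult_le_compat; try apply Rabs_pos; auto.
  - apply Rmult_le_pos; apply Rabs_pos.
  - apply Rmult_le_compat; try apply Rabs_pos; auto.
Qed.

Lemma Gop_le_majorant n m B x0 A0 x p A : (m <= n)%nat -> near n x0 x 1 ->
  (forall i i', (i < n)%nat -> (i' < n)%nat -> Rabs (A i i' - A0 i i') < 1) ->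
  (exists j, (j < m)%nat /\ Xvec n m B x p j <> 0) ->
  Gop n m B x p A <= fsum m (fun j => X2mat_majorant n m B x0 A0 j j)
                     + fsum m (fun j => fsum m (fun l => X2mat_majorant n m B x0 A0 l j)).
Proof.
  intros Hmn Hx HA Hq. unfold Gop.
  eapply Rle_trans; [apply Fop_le_abs, sqnorm_pos, Hq|].
  apply Rplus_le_compat; apply fsum_le; intros j Hj.
  - apply X2mat_abs_le_majorant; auto.
  - apply fsum_le; intros l Hl. apply X2mat_abs_le_majorant; auto.
Qed.

(** [attained delta v]: [v] is a value taken at an admissible point within
    [delta]; the limsup is the supremum of the [w] below such values at every scale. *)
Section Limsup.

Variable attained : R -> R -> Prop.

Definition limsup_lower (w : R) : Prop :=
  forall delta, 0 < delta -> exists v, attained delta v /\ w <= v.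

Lemma limsup_exists w0 : bound limsup_lower -> limsup_lower w0 ->
  exists L, w0 <= L /\ forall eps, 0 < eps ->
    (exists delta, 0 < delta /\ forall v, attained delta v -> v < L + eps) /\
    (forall delta, 0 < delta -> exists v, attained delta v /\ L - eps < v).
Proof.
  intros Hb Hw0.
  destruct (completeness limsup_lower Hb (ex_intro _ w0 Hw0)) as [L [Hub Hlub]].
  exists L. split; [now apply Hub|]. intros eps Heps. split.
  - apply NNPP. intros Hno.
    assert (Hup : limsup_lower (L + eps)).
    { intros delta Hd. apply NNPP. intros Hno'. apply Hno. exists delta. split; [exact Hd|].
      intros v Hv. apply Rnot_le_lt. intros Hle. apply Hno'. exists v. auto. }
    specialize (Hub _ Hup). lra.
  - intros delta Hd.
    assert (Hw : exists w, limsup_lower w /\ L - eps < w).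
    { apply NNPP. intros Hno.
      assert (L <= L - eps); [|lra].
      apply Hlub. intros w Hw. apply Rnot_lt_le. intros Hlt. apply Hno. exists w. auto. }
    destruct Hw as [w [Hw Hlt]]. destruct (Hw delta Hd) as [v [Hv Hwv]].
    exists v. split; [exact Hv|lra].
Qed.

End Limsup.

Definition G_attained n m B x t p A (delta v : R) : Prop :=
  exists x' t' p' A', G_dom n m B x' t' p' A' /\ close4 n x t p A x' t' p' A' delta /\
    Gop n m B x' p' A' = v.

Lemma Gstar_exists n m B x t p A w0 : (m <= n)%nat ->
  limsup_lower (G_attained n m B x t p A) w0 ->
  exists L, w0 <= L /\ Gstar_is n m B x t p A L.
Proof.
  intros Hmn Hw0.
  destruct (limsup_exists (G_attained n m B x t p A) w0) as [L [HL Hlim]]; [|exact Hw0|].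
  - exists (fsum m (fun j => X2mat_majorant n m B x A j j)
            + fsum m (fun j => fsum m (fun l => X2mat_majorant n m B x A l j))).
    intros w Hw. destruct (Hw 1 Rlt_0_1) as [v [Hv Hwv]].
    destruct Hv as (x' & t' & p' & A' & (_ & _ & _ & _ & Hq) & (Hx & _ & _ & HA) & <-).
    eapply Rle_trans; [exact Hwv|]. apply Gop_le_majorant; auto.
  - exists L. split; [exact HL|]. intros eps Heps.
    destruct (Hlim eps Heps) as [[delta [Hd Hup]] Hdown]. split.
    + exists delta. split; [exact Hd|]. intros x' t' p' A' Hdom Hcl.
      apply Hup. exists x', t', p', A'. auto.
    + intros delta' Hd'.
      destruct (Hdown delta' Hd') as [v [(x' & t' & p' & A' & Hdom & Hcl & <-) Hv]].
      exists x', t', p', A'. auto.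
Qed.

Lemma limsup_lower_G_attained n m B x t p A alpha : (0 < m)%nat -> (m <= n)%nat ->
  inRd n x -> 0 < t -> inRd n p ->
  (forall i j, (i < n)%nat -> (j < n)%nat -> A i j = A j i) ->
  (forall xi, qform m (fun j l => - X2mat n m B x A j l) xi >= alpha * sqnorm m xi) ->
  limsup_lower (G_attained n m B x t p A) ((INR m - 1) * alpha).
Proof.
  intros Hm Hmn Hx Ht Hp HA Hconc delta Hd.
  set (q0 := Xvec n m B x p 0).
  set (s := if Req_EM_T (q0 + delta / 2) 0 then delta / 4 else delta / 2).
  assert (Hs : q0 + s <> 0 /\ 0 < s < delta).
  { unfold s. destruct (Req_EM_T (q0 + delta / 2) 0); split; try lra; intro; lra. }
  assert (Hq : exists j, (j < m)%nat /\ Xvec n m B x (upd p 0 s) j <> 0).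
  { exists 0%nat. split; [exact Hm|]. rewrite Xvec_upd by lia. apply Hs. }
  exists (Gop n m B x (upd p 0 s) A). split.
  - exists x, t, (upd p 0 s), A.
    split; [|split; [|reflexivity]].
    + repeat split; auto.
      intros k Hk. unfold upd. destruct (Nat.eqb_spec k 0); [lia|]. apply Hp, Hk.
    + split; [|split; [|split]].
      * intros i _. rewrite Rminus_diag, Rabs_R0. exact Hd.
      * rewrite Rminus_diag, Rabs_R0. exact Hd.
      * intros i _. unfold upd. destruct (Nat.eqb i 0).
        -- replace (p i + s - p i) with s by ring. rewrite Rabs_right; lra.
        -- rewrite Rminus_diag, Rabs_R0. exact Hd.
      * intros i j _ _. rewrite Rminus_diag, Rabs_R0. exact Hd.
  - apply Rge_le, Fop_ge_of_concave; auto.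
Qed.

Lemma upd_0 x i : upd x i 0 = x.
Proof. apply functional_extensionality; intros k. unfold upd. destruct (Nat.eqb k i); ring. Qed.

Lemma upd_inRd d z i h : inRd d z -> (i < d)%nat -> inRd d (upd z i h).
Proof. intros Hz Hi k Hk. unfold upd. destruct (Nat.eqb_spec k i); [lia|]. apply Hz, Hk. Qed.

Lemma upd_near d z i h delta : Rabs h < delta -> 0 < delta -> near d z (upd z i h) delta.
Proof.
  intros Hh Hd k _. unfold upd. destruct (Nat.eqb k i).
  - replace (z k + h - z k) with h by ring. exact Hh.
  - rewrite Rminus_diag, Rabs_R0. exact Hd.
Qed.

Definition upd2 (z : nat -> R) i j u v : nat -> R := upd (upd z i u) j v.

Lemma upd_upd2_r z i j u v h : upd (upd2 z i j u v) j h = upd2 z i j u (v + h).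
Proof.
  apply functional_extensionality; intros k. unfold upd2, upd.
  destruct (Nat.eqb k j), (Nat.eqb k i); ring.
Qed.

Lemma upd_upd2_l z i j u v h : i <> j -> upd (upd2 z i j u v) i h = upd2 z i j (u + h) v.
Proof.
  intros Hij. apply functional_extensionality; intros k. unfold upd2, upd.
  destruct (Nat.eqb_spec k j), (Nat.eqb_spec k i); subst; try ring; lia.
Qed.

Lemma upd2_0 z i j : upd2 z i j 0 0 = z.
Proof. unfold upd2. rewrite !upd_0. reflexivity. Qed.

Lemma upd2_inRd d z i j u v : inRd d z -> (i < d)%nat -> (j < d)%nat -> inRd d (upd2 z i j u v).
Proof.
  intros Hz Hi Hj k Hk. unfold upd2, upd.
  destruct (Nat.eqb_spec k j), (Nat.eqb_spec k i); try lia. apply Hz, Hk.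
Qed.

Lemma upd2_near d z i j u v delta : i <> j -> Rabs u < delta -> Rabs v < delta -> 0 < delta ->
  near d z (upd2 z i j u v) delta.
Proof.
  intros Hij Hu Hv Hd k _. unfold upd2, upd.
  destruct (Nat.eqb_spec k j), (Nat.eqb_spec k i); subst; try lia.
  - replace (z j + v - z j) with v by ring. exact Hv.
  - replace (z i + u - z i) with u by ring. exact Hu.
  - rewrite Rminus_diag, Rabs_R0. exact Hd.
Qed.

Lemma derivable_pt_lim_shift (F : R -> R) v l :
  derivable_pt_lim (fun h => F (v + h)) 0 l -> derivable_pt_lim F v l.
Proof.
  intros H eps Heps. destruct (H eps Heps) as [delta Hdelta]. exists delta.
  intros h Hh Hhd. specialize (Hdelta h Hh Hhd). rewrite !Rplus_0_l, Rplus_0_r in Hdelta.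
  exact Hdelta.
Qed.

Lemma is_derive_along_path d Om (g Dg : (nat -> R) -> R) k (w : R -> nat -> R) s :
  (forall x, inRd d x -> Om x -> derivable_pt_lim (fun h => g (upd x k h)) 0 (Dg x)) ->
  (forall h, upd (w s) k h = w (s + h)) -> inRd d (w s) -> Om (w s) ->
  is_derive (fun s => g (w s)) s (Dg (w s)).
Proof.
  intros Hg Hw Hd HOm. apply is_derive_Reals, derivable_pt_lim_shift.
  apply (derivable_pt_lim_ext (fun h => g (upd (w s) k h))).
  - intros h. rewrite Hw. reflexivity.
  - apply Hg; assumption.
Qed.

Lemma continuity_2d_pt_upd2 d Om g z i j : cont_on d Om g -> inRd d z ->
  (forall u v, Om (upd2 z i j u v)) -> i <> j -> (i < d)%nat -> (j < d)%nat ->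
  continuity_2d_pt (fun u v => g (upd2 z i j u v)) 0 0.
Proof.
  intros Hg Hz HOm Hij Hi Hj eps.
  assert (HOmz : Om z) by (rewrite <- (upd2_0 z i j); apply HOm).
  destruct (Hg z Hz HOmz eps (cond_pos eps)) as [delta [Hd Hc]].
  exists (mkposreal delta Hd). intros u v Hu Hv. simpl in Hu, Hv.
  rewrite upd2_0. rewrite Rminus_0_r in Hu, Hv. apply Hc; auto using upd2_inRd.
  apply upd2_near; auto.
Qed.

Lemma C2_on_D2_sym d Om phi Dphi D2phi z i j :
  C2_on d Om phi Dphi D2phi -> inRd d z ->
  (forall u v, Om (upd2 z i j u v)) -> (i < d)%nat -> (j < d)%nat ->
  D2phi i j z = D2phi j i z.
Proof.
  intros (C1 & C2 & _ & _ & C5) Hz HOm Hi Hj.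
  destruct (Nat.eq_dec i j) as [->|Hij]; [reflexivity|].
  set (f := fun u v => phi (upd2 z i j u v)).
  assert (Hin : forall u v, inRd d (upd2 z i j u v)) by (intros; apply upd2_inRd; auto).
  assert (Dv : forall u v, is_derive (fun t => f u t) v (Dphi j (upd2 z i j u v))).
  { intros u v. apply (is_derive_along_path d Om phi (Dphi j) j (upd2 z i j u));
      [intros; apply C1; auto|intros; apply upd_upd2_r|auto|auto]. }
  assert (Du : forall u v, is_derive (fun s => f s v) u (Dphi i (upd2 z i j u v))).
  { intros u v. apply (is_derive_along_path d Om phi (Dphi i) i (fun s => upd2 z i j s v));
      [intros; apply C1; auto|intros; apply upd_upd2_l, Hij|auto|auto]. }
  assert (Duv : forall u v, is_derive (fun s => Dphi j (upd2 z i j s v)) u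
                              (D2phi i j (upd2 z i j u v))).
  { intros u v. apply (is_derive_along_path d Om (Dphi j) (D2phi i j) i (fun s => upd2 z i j s v));
      [intros; apply C2; auto|intros; apply upd_upd2_l, Hij|auto|auto]. }
  assert (Dvu : forall u v, is_derive (fun t => Dphi i (upd2 z i j u t)) v
                              (D2phi j i (upd2 z i j u v))).
  { intros u v. apply (is_derive_along_path d Om (Dphi i) (D2phi j i) j (upd2 z i j u));
      [intros; apply C2; auto|intros; apply upd_upd2_r|auto|auto]. }
  assert (Ev : forall v, (fun s => Derive (fun t => f s t) v) = (fun s => Dphi j (upd2 z i j s v))).
  { intros v. apply functional_extensionality. intros s. apply is_derive_unique, Dv. }
  assert (Eu : forall u, (fun t => Derive (fun s => f s t) u) = (fun t => Dphi i (upd2 z i j u t))).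
  { intros u. apply functional_extensionality. intros t. apply is_derive_unique, Du. }
  assert (Euv : (fun u v => Derive (fun s => Derive (fun t => f s t) v) u)
                = (fun u v => D2phi i j (upd2 z i j u v))).
  { do 2 (apply functional_extensionality; intros). rewrite Ev. apply is_derive_unique, Duv. }
  assert (Evu : (fun u v => Derive (fun t => Derive (fun s => f s t) u) v)
                = (fun u v => D2phi j i (upd2 z i j u v))).
  { do 2 (apply functional_extensionality; intros). rewrite Eu. apply is_derive_unique, Dvu. }
  pose proof (Schwarz f 0 0) as Hsch.
  pose proof (equal_f (equal_f Euv 0) 0) as Euv0. pose proof (equal_f (equal_f Evu 0) 0) as Evu0.
  cbv beta in Euv0, Evu0. rewrite Euv, Evu, Euv0, Evu0, upd2_0 in Hsch. apply Hsch.
  - exists (mkposreal 1 Rlt_0_1). intros u v _ _. repeat split.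
    + eexists; apply Du.
    + eexists; apply Dv.
    + rewrite Ev. eexists; apply Duv.
    + rewrite Eu. eexists; apply Dvu.
  - apply (continuity_2d_pt_upd2 d Om); auto.
  - apply (continuity_2d_pt_upd2 d Om); auto.
Qed.

Lemma proj_inRd n x : inRd n (proj n x).
Proof. intros k Hk. unfold proj. destruct (Nat.ltb_spec k n); [lia|reflexivity]. Qed.

Lemma proj_upd_time n z h : proj n (upd z n h) = proj n z.
Proof.
  apply functional_extensionality; intros k. unfold proj, upd.
  destruct (Nat.ltb_spec k n), (Nat.eqb_spec k n); try lia; reflexivity.
Qed.

Definition with_time (n : nat) (t : R) (x : nat -> R) : nat -> R :=
  fun i => if Nat.ltb i n then x i else if Nat.eqb i n then t else 0.

Lemma with_time_time n t x : with_time n t x n = t.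
Proof. unfold with_time. rewrite Nat.ltb_irrefl, Nat.eqb_refl. reflexivity. Qed.

Lemma with_time_inRd n t x : inRd (S n) (with_time n t x).
Proof.
  intros k Hk. unfold with_time.
  destruct (Nat.ltb_spec k n), (Nat.eqb_spec k n); try lia; reflexivity.
Qed.

Lemma with_time_upd n t x i h : (i < n)%nat ->
  with_time n t (upd x i h) = upd (with_time n t x) i h.
Proof.
  intros Hi. apply functional_extensionality; intros k. unfold with_time, upd.
  destruct (Nat.ltb_spec k n), (Nat.eqb_spec k i), (Nat.eqb_spec k n); subst; try lia; ring.
Qed.

Lemma with_time_near n t x y delta : 0 < delta -> near n x y delta ->
  near (S n) (with_time n t x) (with_time n t y) delta.
Proof.
  intros Hd Hxy k Hk. unfold with_time. destruct (Nat.ltb_spec k n).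
  - apply Hxy, H.
  - destruct (Nat.eqb k n); rewrite Rminus_diag, Rabs_R0; exact Hd.
Qed.

Lemma with_time_proj n z : inRd (S n) z -> with_time n (z n) (proj n z) = z.
Proof.
  intros Hz. apply functional_extensionality; intros k. unfold with_time, proj.
  destruct (Nat.ltb_spec k n), (Nat.eqb_spec k n); subst; try reflexivity.
  symmetry. apply Hz. lia.
Qed.

Lemma proj_with_time n t x : inRd n x -> proj n (with_time n t x) = x.
Proof.
  intros Hx. apply functional_extensionality; intros k. unfold with_time, proj.
  destruct (Nat.ltb_spec k n); [reflexivity|]. symmetry. apply Hx, H.
Qed.

Lemma cont_on_slice_opp n t g : 0 < t -> cont_on (S n) (spacetime n) g ->
  cont_on n (fun _ => True) (fun x => - g (with_time n t x)).
Proof.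
  intros Ht Hg x _ _ eps Heps.
  assert (Hst : forall y, spacetime n (with_time n t y))
    by (intros; unfold spacetime; rewrite with_time_time; exact Ht).
  destruct (Hg (with_time n t x) (with_time_inRd n t x) (Hst x) eps Heps) as [delta [Hd Hc]].
  exists delta. split; [exact Hd|]. intros y _ _ Hxy.
  replace (- g (with_time n t y) - - g (with_time n t x))
    with (- (g (with_time n t y) - g (with_time n t x))) by ring.
  rewrite Rabs_Ropp. apply Hc; [apply with_time_inRd|apply Hst|apply with_time_near; assumption].
Qed.

Lemma C2_on_slice_opp n t phi Dphi D2phi : 0 < t ->
  C2_on (S n) (spacetime n) phi Dphi D2phi ->
  C2_on n (fun _ => True) (fun x => - phi (with_time n t x)) (fun i x => - Dphi i (with_time n t x))
    (fun i j x => - D2phi i j (with_time n t x)).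
Proof.
  intros Ht (C1 & C2 & C3 & C4 & C5).
  assert (Hst : forall y, spacetime n (with_time n t y))
    by (intros; unfold spacetime; rewrite with_time_time; exact Ht).
  split; [|split; [|split; [|split]]].
  - intros x _ _ i Hi.
    apply (derivable_pt_lim_ext (fun h => - phi (upd (with_time n t x) i h))).
    { intros h. rewrite with_time_upd by exact Hi. reflexivity. }
    apply (derivable_pt_lim_opp (fun h => phi (upd (with_time n t x) i h))).
    apply C1; [apply with_time_inRd|apply Hst|lia].
  - intros x _ _ i j Hi Hj.
    apply (derivable_pt_lim_ext (fun h => - Dphi j (upd (with_time n t x) i h))).
    { intros h. rewrite with_time_upd by exact Hi. reflexivity. }
    apply (derivable_pt_lim_opp (fun h => Dphi j (upd (with_time n t x) i h))).
    apply C2; [apply with_time_inRd|apply Hst|lia|lia].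
  - apply cont_on_slice_opp; assumption.
  - intros i Hi. apply cont_on_slice_opp; [assumption|apply C4; lia].
  - intros i j Hi Hj. apply cont_on_slice_opp; [assumption|apply C5; lia].
Qed.

Lemma lsc_on_of_cont_on d Om f : cont_on d Om f -> lsc_on d Om f.
Proof.
  intros Hf x Hx HOm eps Heps. destruct (Hf x Hx HOm eps Heps) as [delta [Hd Hc]].
  exists delta. split; [exact Hd|]. intros y Hy HOmy Hxy.
  pose proof (Rabs_def2 _ _ (Hc y Hy HOmy Hxy)). lra.
Qed.

Lemma cont_on_time_affine_minus n U c r : cont_on n (fun _ => True) U ->
  cont_on (S n) (spacetime n) (fun z => c * z n - U (proj n z) + r).
Proof.
  intros HU z _ _ eps Heps.
  destruct (HU (proj n z) (proj_inRd n z) I (eps / 2) ltac:(lra)) as [d1 [Hd1 HU1]].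
  set (d2 := eps / (2 * (Rabs c + 1))).
  assert (Hd2 : 0 < d2) by (unfold d2; pose proof (Rabs_pos c);
                            apply Rdiv_lt_0_compat; lra).
  exists (Rmin d1 d2). split; [apply Rmin_pos; assumption|].
  intros y _ _ Hzy.
  assert (Hproj : near n (proj n z) (proj n y) d1).
  { intros i Hi. unfold proj. rewrite (proj2 (Nat.ltb_lt i n) Hi).
    eapply Rlt_le_trans; [apply Hzy; lia|apply Rmin_l]. }
  assert (Htime : Rabs (c * (y n - z n)) <= eps / 2).
  { rewrite Rabs_mult.
    assert (Rabs (y n - z n) <= d2) by (eapply Rlt_le, Rlt_le_trans; [apply Hzy; lia|apply Rmin_r]).
    apply Rle_trans with (Rabs c * d2);
      [apply Rmult_le_compat_l; [apply Rabs_pos|assumption]|].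
    unfold d2. pose proof (Rabs_pos c).
    apply Rmult_le_reg_r with (2 * (Rabs c + 1)); [lra|].
    field_simplify; lra. }
  pose proof (Rabs_def2 _ _ (HU1 (proj n y) (proj_inRd n y) I Hproj)).
  apply Rabs_def1; apply Rabs_le_between in Htime; lra.
Qed.

Lemma derivative_ge_of_left_bound f x l c d : derivable_pt_lim f x l -> 0 < d ->
  (forall h, - d < h < 0 -> f (x + h) - f x <= c * h) -> c <= l.
Proof.
  intros Hf Hd Hleft. apply Rnot_lt_le. intros Hlt.
  destruct (Hf (c - l) ltac:(lra)) as [delta Hdelta].
  pose proof (cond_pos delta) as Hdp.
  set (h := - Rmin delta d / 2).
  assert (Hmin : 0 < Rmin delta d) by (apply Rmin_pos; lra).
  pose proof (Rmin_l delta d). pose proof (Rmin_r delta d).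
  assert (Hh : - d < h < 0) by (unfold h; lra).
  assert (Hhabs : Rabs h < delta) by (rewrite Rabs_left by lra; unfold h; lra).
  specialize (Hdelta h ltac:(lra) Hhabs). specialize (Hleft h Hh).
  set (q := (f (x + h) - f x) / h) in Hdelta.
  assert (Hq : f (x + h) - f x = q * h) by (unfold q; field; lra).
  apply Rabs_def2 in Hdelta. nra.
Qed.

Section Touching.

Variables (n : nat) (U : (nat -> R) -> R) (c r : R).
Variables (phi : (nat -> R) -> R) (Dphi : nat -> (nat -> R) -> R)
  (D2phi : nat -> nat -> (nat -> R) -> R) (z : nat -> R).
Hypothesis HC2 : C2_on (S n) (spacetime n) phi Dphi D2phi.
Hypothesis Hz : inRd (S n) z.
Hypothesis Hzt : spacetime n z.
Hypothesis Hmin : exists delta, 0 < delta /\ forall y, inRd (S n) y -> spacetime n y ->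
  near (S n) z y delta ->
  (c * y n - U (proj n y) + r) - phi y >= (c * z n - U (proj n z) + r) - phi z.

Lemma touching_time_derivative_ge : c <= Dphi n z.
Proof.
  destruct Hmin as [delta [Hd Hy]]. unfold spacetime in Hzt.
  apply (derivative_ge_of_left_bound (fun h => phi (upd z n h)) 0 _ c (Rmin delta (z n))).
  - apply HC2; auto.
  - apply Rmin_pos; assumption.
  - intros h [Hlo Hhi]. rewrite Rplus_0_l, upd_0.
    pose proof (Rmin_l delta (z n)). pose proof (Rmin_r delta (z n)).
    assert (Htime : upd z n h n = z n + h) by (unfold upd; rewrite Nat.eqb_refl; reflexivity).
    specialize (Hy (upd z n h) (upd_inRd _ _ n h Hz (Nat.lt_succ_diag_r n))).
    rewrite Htime, proj_upd_time in Hy.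
    assert (0 < z n + h) by lra.
    assert (Hhabs : Rabs h < delta) by (rewrite Rabs_left by lra; lra).
    specialize (Hy ltac:(unfold spacetime; rewrite Htime; lra) (upd_near _ _ _ _ _ Hhabs Hd)).
    lra.
Qed.

(* Needed because [G_dom] only admits symmetric matrices. *)
Lemma touching_D2_sym i j : (i < n)%nat -> (j < n)%nat -> D2phi i j z = D2phi j i z.
Proof.
  intros Hi Hj. apply (C2_on_D2_sym (S n) (spacetime n) phi Dphi D2phi z i j HC2 Hz); try lia.
  intros u v. unfold spacetime, upd2, upd.
  destruct (Nat.eqb_spec n j), (Nat.eqb_spec n i); try lia. exact Hzt.
Qed.

Lemma touching_slice_concave m B alpha : vconvex_with n m B U alpha ->
  forall xi, qform m (fun j l => - X2mat n m B (proj n z) (fun i i' => D2phi i i' z) j l) xi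
             >= alpha * sqnorm m xi.
Proof.
  intros Hv xi.
  set (psi := fun x => - phi (with_time n (z n) x)).
  assert (Hmax : exists delta, 0 < delta /\ forall y, inRd n y -> near n (proj n z) y delta ->
                   U y - psi y <= U (proj n z) - psi (proj n z)).
  { destruct Hmin as [delta [Hd Hy]]. exists delta. split; [exact Hd|]. intros y Hyn Hnear.
    assert (Hw : near (S n) z (with_time n (z n) y) delta).
    { rewrite <- (with_time_proj n z Hz) at 1. apply with_time_near; assumption. }
    specialize (Hy _ (with_time_inRd n (z n) y)
                  ltac:(unfold spacetime; rewrite with_time_time; exact Hzt) Hw).
    unfold psi. rewrite with_time_time, proj_with_time in Hy by exact Hyn.
    rewrite with_time_proj by exact Hz. lra. }
  pose proof (Hv _ _ _ (C2_on_slice_opp n (z n) phi Dphi D2phi Hzt HC2)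
                (proj n z) (proj_inRd n z) Hmax xi) as Hq.
  cbv beta in Hq. rewrite with_time_proj in Hq by exact Hz.
  eapply Rge_trans; [|exact Hq]. right. unfold qform.
  apply fsum_ext; intros j _. apply fsum_ext; intros l _. rewrite X2mat_opp. reflexivity.
Qed.

End Touching.

Theorem proposition4p2 (n m : nat) (B : nat -> nat -> nat -> R)
  (U : (nat -> R) -> R) (alpha c r : R) :
  (2 <= m)%nat -> (m < n)%nat ->
  skew_family n m B -> lin_indep_family n m B ->
  cont_on n (fun _ => True) U ->
  0 < alpha -> vconvex_with n m B U alpha ->
  c >= - (INR m - 1) * alpha ->
  supersol n m B (fun z => c * z n - U (proj n z) + r).
Proof.
  intros Hm Hmn _ _ HU _ Hv Hc. split.
  - apply lsc_on_of_cont_on, cont_on_time_affine_minus, HU.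
  - intros phi Dphi D2phi HC2 z Hz Hzt Hmin.
    pose proof (touching_time_derivative_ge n U c r phi Dphi D2phi z HC2 Hz Hzt Hmin) as Ht.
    destruct (Gstar_exists n m B (proj n z) (z n) (proj n (fun i => Dphi i z))
                (fun i j => D2phi i j z) ((INR m - 1) * alpha)) as [L [HL HGstar]]; [lia| |].
    + apply limsup_lower_G_attained; [lia|lia|apply proj_inRd|exact Hzt|apply proj_inRd| |].
      * exact (touching_D2_sym n phi Dphi D2phi z HC2 Hz Hzt).
      * exact (touching_slice_concave n U c r phi Dphi D2phi z HC2 Hz Hzt Hmin m B alpha Hv).
    + exists L. split; [exact HGstar|lra].
Qed.
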